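(* Let $X$ be an FK-space containing $\phi$ and let $(Y^n)_{n\ge1}$ be FK-spaces such that each $Y^n$ is deferred Ces\`{a}ro conull with respect to $X$. Then $\bigcap_n Y^n$ (with its intersection FK-topology) is deferred Ces\`{a}ro conull with respect to $X$.
   Context: An FK-space is a vector subspace of the space $w$ of all complex sequences with a complete metrizable locally convex topology in which all coordinate functionals are continuous; $X'$ is the continuous dual. The intersection $\bigcap_n Y^n$ of FK-spaces is an FK-space with the topology generated by all seminorms of all $Y^n$ (paranorm $\sum_n \rho_n/(2^n(1+\rho_n))$). $\delta^j$ is the sequence with $1$ in position $j$, $0$ elsewhere; $\phi=\operatorname{span}\{\delta^j\}$. Fix nonnegative integer sequences $p(n)<q(n)$ with $q(n)\to\infty$. For $x\in w$ let $x^{(k)}=\sum_{j=1}^k x_j\delta^j$ and $T_n(x)=\frac{1}{q(n)-p(n)}\sum_{k=p(n)+1}^{q(n)}x^{(k)}$. For an FK-space $X\supseteq\phi$: $D_p^qW(X)=\{x\in X : f(T_n(x))\to f(x)\ \forall f\in X'\}$; $D_p^qB(X)=\{x\in X : \sup_n|f(T_n(x))|<\infty\ \forall f\in X'\}$. For FK-spaces $X\subseteq Y$ with $D_p^qW(X)\neq D_p^qB(X)$, $Y$ is called deferred Ces\`{a}ro conull with respect to $X$ if $D_p^qB(X)\subseteq D_p^qW(Y)$. *)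

From Stdlib Require Import Reals List.
From Coquelicot Require Import Coquelicot.
Open Scope R_scope.

(* Complex sequences; [x j] is the (j+1)-th coordinate of the paper's x. *)
Definition cseq := nat -> C.

Definition szero : cseq := fun _ => RtoC 0.
Definition sadd (x y : cseq) : cseq := fun j => Cplus (x j) (y j).
Definition sscal (c : C) (x : cseq) : cseq := fun j => Cmult c (x j).
Definition ssub (x y : cseq) : cseq := fun j => Cminus (x j) (y j).

Definition delta (j : nat) : cseq := fun i => if Nat.eqb i j then RtoC 1 else RtoC 0.

Definition subspace (X : cseq -> Prop) : Prop :=
  X szero /\ (forall x y, X x -> X y -> X (sadd x y)) /\
  (forall c x, X x -> X (sscal c x)).

Definition seminorm_family {I : Type} (X : cseq -> Prop) (p : I -> cseq -> R) : Prop :=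
  forall i, (forall x, X x -> 0 <= p i x) /\
    (forall x y, X x -> X y -> p i (sadd x y) <= p i x + p i y) /\
    (forall c x, X x -> p i (sscal c x) = Cmod c * p i x).

Definition countable_index (I : Type) : Prop :=
  exists e : nat -> option I, forall i, exists n, e n = Some i.

Definition semisum {I : Type} (p : I -> cseq -> R) (l : list I) (x : cseq) : R :=
  fold_right (fun i acc => p i x + acc) 0 l.

(* Continuity (at 0, hence everywhere for linear maps) of a functional
   for the locally convex topology generated by the family p. *)
Definition continuous_wrt {I : Type} (X : cseq -> Prop) (p : I -> cseq -> R)
  (f : cseq -> C) : Prop :=
  exists (l : list I) (c : R), forall x, X x -> Cmod (f x) <= c * semisum p l x.

Definition linear_on (X : cseq -> Prop) (f : cseq -> C) : Prop :=
  (forall x y, X x -> X y -> f (sadd x y) = Cplus (f x) (f y)) /\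
  (forall c x, X x -> f (sscal c x) = Cmult c (f x)).

Definition dual {I : Type} (X : cseq -> Prop) (p : I -> cseq -> R) (f : cseq -> C) : Prop :=
  linear_on X f /\ continuous_wrt X p f.

(* sequential completeness (equivalent to completeness for countable families) *)
Definition complete_wrt {I : Type} (X : cseq -> Prop) (p : I -> cseq -> R) : Prop :=
  forall u : nat -> cseq, (forall m, X (u m)) ->
    (forall i (eps : R), 0 < eps -> exists N, forall m n, (N <= m)%nat -> (N <= n)%nat ->
        p i (ssub (u m) (u n)) < eps) ->
    exists x, X x /\ forall i, is_lim_seq (fun m => p i (ssub (u m) x)) 0.

(* FK-space: vector subspace of w with a complete metrizable locally convex
   topology (given by a countable family of seminorms) in which all
   coordinate functionals are continuous (this also gives Hausdorffness). *)
Definition is_FK {I : Type} (X : cseq -> Prop) (p : I -> cseq -> R) : Prop :=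
  subspace X /\ seminorm_family X p /\ countable_index I /\
  (forall j, continuous_wrt X p (fun x => x j)) /\ complete_wrt X p.

Definition contains_phi (X : cseq -> Prop) : Prop := forall j, X (delta j).

(* x^(k) = sum_{j=1}^k x_j delta^j : keeps the first k coordinates *)
Definition trunc (k : nat) (x : cseq) : cseq :=
  fun j => if Nat.ltb j k then x j else RtoC 0.

Definition csum (l : list C) : C := fold_right Cplus (RtoC 0) l.

(* T_n(x) = 1/(q n - p n) * sum_{k = p n + 1}^{q n} x^(k) *)
Definition Tn (pp qq : nat -> nat) (n : nat) (x : cseq) : cseq :=
  fun j => Cmult (RtoC (/ INR (qq n - pp n)))
     (csum (map (fun k => trunc k x j) (seq (S (pp n)) (qq n - pp n)))).

Definition DW (pp qq : nat -> nat) {I : Type} (X : cseq -> Prop) (p : I -> cseq -> R)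
  (x : cseq) : Prop :=
  X x /\ forall f, dual X p f ->
    is_lim_seq (fun n => Cmod (Cminus (f (Tn pp qq n x)) (f x))) 0.

Definition DB (pp qq : nat -> nat) {I : Type} (X : cseq -> Prop) (p : I -> cseq -> R)
  (x : cseq) : Prop :=
  X x /\ forall f, dual X p f -> exists M : R, forall n, Cmod (f (Tn pp qq n x)) <= M.

Definition dc_conull (pp qq : nat -> nat)
  {IX : Type} (X : cseq -> Prop) (pX : IX -> cseq -> R)
  {IY : Type} (Y : cseq -> Prop) (pY : IY -> cseq -> R) : Prop :=
  is_FK X pX /\ is_FK Y pY /\ (forall x, X x -> Y x) /\
  (exists x, ~ (DW pp qq X pX x <-> DB pp qq X pX x)) /\
  (forall x, DB pp qq X pX x -> DW pp qq Y pY x).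

Definition inter_space (Y : nat -> cseq -> Prop) : cseq -> Prop :=
  fun x => forall n, Y n x.

Definition inter_semi {IY : nat -> Type} (pY : forall n, IY n -> cseq -> R)
  : {n : nat & IY n} -> cseq -> R :=
  fun ni x => pY (projT1 ni) (projT2 ni) x.

(* A functional f continuous on the intersection of the Y^n is dominated by
   c (q_1 + ... + q_k), where each q_i is a seminorm of some Y^(n_i).  Hahn-Banach,
   applied on a product of two spaces and one seminorm at a time, splits f into a
   finite sum of functionals g_i continuous on Y^(n_i).  For x in D_p^qB(X), each
   g_i(T_n x) tends to g_i(x) because Y^(n_i) is conull with respect to X, hence
   so does f(T_n x).  The intersection is an FK-space because limits in the
   various Y^n agree coordinatewise. *)

From Pilot Require Import Defs.
From Stdlib Require Import Reals List Lra Lia Cantor ClassicalEpsilon IndefiniteDescription.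
From Stdlib Require Import FunctionalExtensionality PropExtensionality Classical.
From Coquelicot Require Import Coquelicot.
From mathcomp Require classical_sets.
Set Bullet Behavior "Strict Subproofs".
Open Scope R_scope.

Section RealVectorSpace.

(* Coquelicot's module laws restated with the operations of [R] rather than those of
   [R_Ring], so that they rewrite; [scal (-1)] is used instead of [opp] for the same reason. *)
Context {E : ModuleSpace R_Ring}.

Lemma scal_R0 (u : E) : scal 0 u = zero.
Proof. exact (scal_zero_l u). Qed.

Lemma scal_R1 (u : E) : scal 1 u = u.
Proof. exact (scal_one u). Qed.

Lemma scal_mult (s t : R) (u : E) : scal s (scal t u) = scal (s * t) u.
Proof. exact (scal_assoc s t u). Qed.

Lemma scal_Rplus (s t : R) (u : E) : scal (s + t) u = plus (scal s u) (scal t u).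
Proof. exact (scal_distr_r s t u). Qed.

Lemma plus_scal_m1_l (y : E) : plus (scal (-1) y) y = zero.
Proof.
rewrite <- (scal_R1 y) at 2. rewrite <- scal_Rplus. replace (-1 + 1) with 0 by ring. apply scal_R0.
Qed.

Lemma plus_cancel_l (u v : E) : plus (scal (-1) u) (plus u v) = v.
Proof. now rewrite plus_assoc, plus_scal_m1_l, plus_zero_l. Qed.

Lemma scal_inv_plus (t r : R) (s y : E) :
  t <> 0 -> scal t (plus (scal (/ t) s) (scal r y)) = plus s (scal (t * r) y).
Proof.
intros Ht. rewrite scal_distr_l, !scal_mult, Rinv_r by exact Ht.
now rewrite scal_R1.
Qed.

Lemma plus_scal_plus (s1 s2 y : E) (t1 t2 : R) :
  plus (plus s1 (scal t1 y)) (plus s2 (scal t2 y)) = plus (plus s1 s2) (scal (t1 + t2) y).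
Proof.
rewrite scal_Rplus, !plus_assoc. f_equal. rewrite <- !plus_assoc. f_equal. apply plus_comm.
Qed.

Lemma scal_plus_scal (c t : R) (s y : E) :
  scal c (plus s (scal t y)) = plus (scal c s) (scal (c * t) y).
Proof. now rewrite scal_distr_l, scal_mult. Qed.

Lemma plus_scal_R0 (s y : E) : plus s (scal 0 y) = s.
Proof. now rewrite scal_R0, plus_zero_r. Qed.

Lemma plus_shift (s s' y : E) : plus s s' = plus (plus s (scal (-1) y)) (plus s' y).
Proof.
rewrite (plus_comm s' y), !plus_assoc. f_equal.
now rewrite <- (plus_assoc s), plus_scal_m1_l, plus_zero_r.
Qed.

Lemma plus_scal_eq_sub (s1 s2 y : E) (t1 t2 : R) :
  plus s1 (scal t1 y) = plus s2 (scal t2 y) ->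
  scal (t1 - t2) y = plus s2 (scal (-1) s1).
Proof.
intros Heq. unfold Rminus. rewrite scal_Rplus, <- (plus_cancel_l s1 (scal t1 y)), Heq.
rewrite <- !plus_assoc, <- scal_Rplus, Rplus_opp_r, scal_R0, plus_zero_r.
apply plus_comm.
Qed.

End RealVectorSpace.

Section HahnBanach.

Context {E : ModuleSpace R_Ring}.
Variables (Dom : E -> Prop) (p : E -> R).
Hypothesis Dom_plus : forall u v, Dom u -> Dom v -> Dom (plus u v).
Hypothesis Dom_scal : forall (t : R) v, Dom v -> Dom (scal t v).
Hypothesis p_subadditive : forall u v, Dom u -> Dom v -> p (plus u v) <= p u + p v.
Hypothesis p_homogeneous : forall (t : R) v, 0 < t -> Dom v -> p (scal t v) = t * p v.

(* Partial extensions are represented by their graphs, so that Zorn's lemma can be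
   applied to sets of pairs. *)
Record dominated_graph (G : E * R -> Prop) : Prop := {
  graph_functional : forall v a b, G (v, a) -> G (v, b) -> a = b;
  graph_Dom : forall v a, G (v, a) -> Dom v;
  graph_plus : forall u v a b, G (u, a) -> G (v, b) -> G (plus u v, a + b);
  graph_scal : forall (t : R) v a, G (v, a) -> G (scal t v, t * a);
  graph_le : forall v a, G (v, a) -> a <= p v }.

Lemma dominated_graph_pairwise (U : E * R -> Prop) :
  (forall z1 z2, U z1 -> U z2 ->
     exists G, dominated_graph G /\ G z1 /\ G z2 /\ forall z, G z -> U z) ->
  dominated_graph U.
Proof.
intros HU; split.
- intros v a b Ua Ub. destruct (HU _ _ Ua Ub) as [G [HG [Ga [Gb _]]]].
  exact (graph_functional _ HG _ _ _ Ga Gb).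
- intros v a Ua. destruct (HU _ _ Ua Ua) as [G [HG [Ga _]]].
  exact (graph_Dom _ HG _ _ Ga).
- intros u v a b Ua Ub. destruct (HU _ _ Ua Ub) as [G [HG [Ga [Gb GU]]]].
  exact (GU _ (graph_plus _ HG _ _ _ _ Ga Gb)).
- intros t v a Ua. destruct (HU _ _ Ua Ua) as [G [HG [Ga [_ GU]]]].
  exact (GU _ (graph_scal _ HG t _ _ Ga)).
- intros v a Ua. destruct (HU _ _ Ua Ua) as [G [HG [Ga _]]].
  exact (graph_le _ HG _ _ Ga).
Qed.

Lemma graph_decomposition_unique G y s1 s2 a1 a2 t1 t2 :
  dominated_graph G -> (forall a, ~ G (y, a)) -> G (s1, a1) -> G (s2, a2) ->
  plus s1 (scal t1 y) = plus s2 (scal t2 y) -> t1 = t2 /\ s1 = s2.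
Proof.
intros HG Hy G1 G2 Heq.
assert (Ht : t1 = t2).
{ destruct (Req_dec t1 t2) as [|Hne]; [assumption|exfalso].
  assert (Hd : t1 - t2 <> 0) by lra.
  apply (Hy (/ (t1 - t2) * (a2 + -1 * a1))).
  replace y with (scal (/ (t1 - t2)) (scal (t1 - t2) y))
    by now rewrite scal_mult, Rinv_l, scal_R1.
  rewrite (plus_scal_eq_sub _ _ _ _ _ Heq).
  apply (graph_scal _ HG), (graph_plus _ HG), (graph_scal _ HG); assumption. }
subst t2. split; [reflexivity|]. exact (plus_reg_r _ _ _ Heq).
Qed.

Lemma extension_value G y : dominated_graph G -> G (zero, 0) -> Dom y ->
  exists a, forall s b, G (s, b) ->
    b - p (plus s (scal (-1) y)) <= a /\ a <= p (plus s y) - b.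
Proof.
intros HG G0 Hy.
assert (Hsep : forall s b s' b', G (s, b) -> G (s', b') ->
          b - p (plus s (scal (-1) y)) <= p (plus s' y) - b').
{ intros s b s' b' Gs Gs'.
  assert (Hle := graph_le _ HG _ _ (graph_plus _ HG _ _ _ _ Gs Gs')).
  rewrite (plus_shift s s' y) in Hle.
  assert (Hsub := p_subadditive (plus s (scal (-1) y)) (plus s' y)
    (Dom_plus _ _ (graph_Dom _ HG _ _ Gs) (Dom_scal _ _ Hy))
    (Dom_plus _ _ (graph_Dom _ HG _ _ Gs') Hy)).
  lra. }
set (A := fun r => exists s b, G (s, b) /\ r = b - p (plus s (scal (-1) y))).
destruct (completeness A) as [a [Hub Hlub]].
- exists (p (plus zero y) - 0). intros r [s [b [Gs ->]]]. exact (Hsep _ _ _ _ Gs G0).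
- exists (0 - p (plus zero (scal (-1) y))), zero, 0. auto.
- exists a. intros s b Gs. split.
  + apply Hub. now exists s, b.
  + apply Hlub. intros r [s' [b' [Gs' ->]]]. exact (Hsep _ _ _ _ Gs' Gs).
Qed.

Lemma extension_dominated G y a s b t : dominated_graph G ->
  (forall s b, G (s, b) -> b - p (plus s (scal (-1) y)) <= a /\ a <= p (plus s y) - b) ->
  Dom y -> G (s, b) -> b + t * a <= p (plus s (scal t y)).
Proof.
intros HG Ha Hy Gs.
assert (Ds := graph_Dom _ HG _ _ Gs).
destruct (Rtotal_order t 0) as [Hneg|[->|Hpos]].
- set (u := - t). assert (Hu : 0 < u) by (unfold u; lra).
  destruct (Ha _ _ (graph_scal _ HG (/ u) _ _ Gs)) as [Hlow _].
  replace t with (u * -1) by (unfold u; ring).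
  rewrite <- scal_inv_plus, p_homogeneous by (auto; lra).
  assert (Hmul : u * (/ u * b - p (plus (scal (/ u) s) (scal (-1) y))) <= u * a)
    by (apply Rmult_le_compat_l; lra).
  rewrite Rmult_minus_distr_l, <- Rmult_assoc, Rinv_r, Rmult_1_l in Hmul by lra.
  lra.
- rewrite plus_scal_R0, Rmult_0_l, Rplus_0_r. exact (graph_le _ HG _ _ Gs).
- destruct (Ha _ _ (graph_scal _ HG (/ t) _ _ Gs)) as [_ Hup].
  replace t with (t * 1) at 2 by ring.
  rewrite <- scal_inv_plus, scal_R1, p_homogeneous by (auto; lra).
  assert (Hmul : t * a <= t * (p (plus (scal (/ t) s) y) - / t * b))
    by (apply Rmult_le_compat_l; lra).
  rewrite Rmult_minus_distr_l, <- Rmult_assoc, Rinv_r, Rmult_1_l in Hmul by lra.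
  lra.
Qed.

Lemma dominated_graph_extend G y : dominated_graph G -> G (zero, 0) -> Dom y ->
  (forall a, ~ G (y, a)) ->
  exists G', dominated_graph G' /\ (forall z, G z -> G' z) /\ exists a, G' (y, a).
Proof.
intros HG G0 Hy Hny.
destruct (extension_value G y HG G0 Hy) as [a Ha].
exists (fun z => exists s b t, G (s, b) /\ z = (plus s (scal t y), b + t * a)).
split; [split|split].
- intros v c1 c2 [s1 [b1 [t1 [G1 E1]]]] [s2 [b2 [t2 [G2 E2]]]].
  injection E1 as Ev1 ->. injection E2 as Ev2 ->.
  destruct (graph_decomposition_unique G y _ _ _ _ _ _ HG Hny G1 G2
    (eq_trans (eq_sym Ev1) Ev2)) as [-> ->].
  now rewrite (graph_functional _ HG _ _ _ G1 G2).
- intros v c [s [b [t [Gs Ev]]]]. injection Ev as -> _.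
  exact (Dom_plus _ _ (graph_Dom _ HG _ _ Gs) (Dom_scal _ _ Hy)).
- intros u v c1 c2 [s1 [b1 [t1 [G1 E1]]]] [s2 [b2 [t2 [G2 E2]]]].
  injection E1 as -> ->. injection E2 as -> ->.
  exists (plus s1 s2), (b1 + b2), (t1 + t2).
  split; [exact (graph_plus _ HG _ _ _ _ G1 G2)|].
  rewrite plus_scal_plus. f_equal. ring.
- intros c v c1 [s [b [t [Gs Ev]]]]. injection Ev as -> ->.
  exists (scal c s), (c * b), (c * t). split; [exact (graph_scal _ HG c _ _ Gs)|].
  rewrite scal_plus_scal. f_equal. ring.
- intros v c [s [b [t [Gs Ev]]]]. injection Ev as -> ->.
  exact (extension_dominated G y a s b t HG Ha Hy Gs).
- intros [s b] Gs. exists s, b, 0. split; [exact Gs|].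
  now rewrite plus_scal_R0, Rmult_0_l, Rplus_0_r.
- exists (0 + 1 * a), zero, 0, 1. split; [exact G0|]. now rewrite plus_zero_l, scal_R1.
Qed.

Lemma dominated_graph_chain_union G0 (F : classical_sets.set (classical_sets.set (E * R))) :
  dominated_graph G0 -> (forall A, F A -> dominated_graph (fun z => A z \/ G0 z)) ->
  classical_sets.total_on F classical_sets.subset ->
  dominated_graph (fun z => classical_sets.bigcup F (fun A => A) z \/ G0 z).
Proof.
intros HG0 HF Ftot. apply dominated_graph_pairwise.
intros z1 z2 [[A1 F1 A1z]|G1] [[A2 F2 A2z]|G2].
- destruct (Ftot _ _ F1 F2) as [S12|S21].
  + exists (fun z => A2 z \/ G0 z). split; [exact (HF _ F2)|].
    split; [left; exact (S12 _ A1z)|]. split; [now left|].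
    intros z [Az|Gz]; [left; now exists A2 | now right].
  + exists (fun z => A1 z \/ G0 z). split; [exact (HF _ F1)|].
    split; [now left|]. split; [left; exact (S21 _ A2z)|].
    intros z [Az|Gz]; [left; now exists A1 | now right].
- exists (fun z => A1 z \/ G0 z). split; [exact (HF _ F1)|].
  split; [now left|]. split; [now right|].
  intros z [Az|Gz]; [left; now exists A1 | now right].
- exists (fun z => A2 z \/ G0 z). split; [exact (HF _ F2)|].
  split; [now right|]. split; [now left|].
  intros z [Az|Gz]; [left; now exists A2 | now right].
- exists G0. split; [exact HG0|]. split; [exact G1|]. split; [exact G2|].
  intros z Gz. now right.
Qed.

Lemma maximal_dominated_graph G0 : dominated_graph G0 -> G0 (zero, 0) ->
  exists G, dominated_graph G /\ (forall z, G0 z -> G z) /\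
    forall y, Dom y -> exists a, G (y, a).
Proof.
intros HG0 G00.
(* Zorn's lemma is applied to the sets [A] with [A \/ G0] dominated: the empty chain then
   has an admissible union. *)
destruct (@classical_sets.Zorn_bigcup _
  (fun A => dominated_graph (fun z => A z \/ G0 z))) as [A [PA Amax]].
{ intros F FP Ftot. exact (dominated_graph_chain_union G0 F HG0 FP Ftot). }
exists (fun z => A z \/ G0 z). split; [exact PA|]. split; [now right|].
intros y Hy. apply NNPP. intros Hno.
destruct (dominated_graph_extend _ y PA (or_intror G00) Hy) as [G' [HG' [Hsub [a Ga]]]].
{ intros a Ha. apply Hno. now exists a. }
apply (Amax G').
- split; [intros z Az; apply Hsub; now left|].
  intros HA. apply Hno. exists a. left. exact (HA _ Ga).
- replace (fun z => G' z \/ G0 z) with G'; [exact HG'|].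
  apply functional_extensionality. intros z. apply propositional_extensionality.
  split; [now left | intros [Gz|Gz]; [exact Gz | apply Hsub; now right]].
Qed.

Theorem hahn_banach (M : E -> Prop) (phi : E -> R) :
  M zero -> (forall v, M v -> Dom v) ->
  (forall u v, M u -> M v -> M (plus u v)) -> (forall (t : R) v, M v -> M (scal t v)) ->
  (forall u v, M u -> M v -> phi (plus u v) = phi u + phi v) ->
  (forall (t : R) v, M v -> phi (scal t v) = t * phi v) ->
  (forall v, M v -> phi v <= p v) ->
  exists Phi : E -> R,
    (forall u v, Dom u -> Dom v -> Phi (plus u v) = Phi u + Phi v) /\
    (forall (t : R) v, Dom v -> Phi (scal t v) = t * Phi v) /\
    (forall v, Dom v -> Phi v <= p v) /\
    (forall v, M v -> Phi v = phi v).
Proof.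
intros M0 MDom Mplus Mscal phi_plus phi_scal phi_le.
set (G0 := fun z : E * R => M (fst z) /\ snd z = phi (fst z)).
assert (HG0 : dominated_graph G0).
{ split; unfold G0; simpl.
  - intros v a b [_ ->] [_ ->]. reflexivity.
  - intros v a [Mv _]. exact (MDom _ Mv).
  - intros u v a b [Mu ->] [Mv ->]. split; [now apply Mplus | now rewrite phi_plus].
  - intros t v a [Mv ->]. split; [now apply Mscal | now rewrite phi_scal].
  - intros v a [Mv ->]. exact (phi_le _ Mv). }
assert (G00 : G0 (zero, 0)).
{ split; [exact M0|]. simpl. rewrite <- (scal_R0 zero), phi_scal by exact M0. ring. }
destruct (maximal_dominated_graph G0 HG0 G00) as [G [HG [Hsub Htot]]].
set (Phi := fun v => epsilon (inhabits 0) (fun a => G (v, a))).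
assert (GPhi : forall v, Dom v -> G (v, Phi v))
  by (intros v Hv; exact (epsilon_spec (inhabits 0) (fun a => G (v, a)) (Htot v Hv))).
exists Phi. split; [|split; [|split]].
- intros u v Hu Hv. apply (graph_functional _ HG (plus u v)); [now apply GPhi, Dom_plus|].
  apply (graph_plus _ HG); now apply GPhi.
- intros t v Hv. apply (graph_functional _ HG (scal t v)); [now apply GPhi, Dom_scal|].
  apply (graph_scal _ HG); now apply GPhi.
- intros v Hv. exact (graph_le _ HG _ _ (GPhi v Hv)).
- intros v Mv. apply (graph_functional _ HG v); [now apply GPhi, MDom|].
  apply Hsub. now split.
Qed.

End HahnBanach.

Section FunctionSpace.

Context (T : Type) {K : Ring} (V : ModuleSpace K).

Definition fct_AbelianMonoid_mixin : AbelianMonoid.mixin_of (T -> V) :=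
  AbelianMonoid.Mixin (T -> V) (fun f g t => plus (f t) (g t)) (fun _ => zero)
    (fun f g => functional_extensionality _ _ (fun t => plus_comm (f t) (g t)))
    (fun f g h => functional_extensionality _ _ (fun t => plus_assoc (f t) (g t) (h t)))
    (fun f => functional_extensionality _ _ (fun t => plus_zero_r (f t))).

Canonical fct_AbelianMonoid := AbelianMonoid.Pack (T -> V) fct_AbelianMonoid_mixin (T -> V).

Definition fct_AbelianGroup_mixin : AbelianGroup.mixin_of fct_AbelianMonoid :=
  AbelianGroup.Mixin fct_AbelianMonoid (fun f t => opp (f t))
    (fun f => functional_extensionality _ _ (fun t => plus_opp_r (f t))).

Canonical fct_AbelianGroup :=
  AbelianGroup.Pack (T -> V) (AbelianGroup.Class _ _ fct_AbelianGroup_mixin) (T -> V).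

Definition fct_ModuleSpace_mixin : ModuleSpace.mixin_of K fct_AbelianGroup :=
  ModuleSpace.Mixin K fct_AbelianGroup (fun k f t => scal k (f t))
    (fun x y f => functional_extensionality _ _ (fun t => scal_assoc x y (f t)))
    (fun f => functional_extensionality _ _ (fun t => scal_one (f t)))
    (fun x f g => functional_extensionality _ _ (fun t => scal_distr_l x (f t) (g t)))
    (fun x y f => functional_extensionality _ _ (fun t => scal_distr_r x y (f t))).

Canonical fct_ModuleSpace :=
  ModuleSpace.Pack K (T -> V) (ModuleSpace.Class _ _ _ fct_ModuleSpace_mixin) (T -> V).

End FunctionSpace.

Definition cseq_R_ModuleSpace : ModuleSpace R_Ring := fct_ModuleSpace nat C_R_ModuleSpace.

Ltac cseq_ring := let j := fresh "j" in
  apply functional_extensionality; intro j;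
  unfold sadd, sscal, szero, ssub, Cplus, Cmult, Cminus, Copp, RtoC, Ci;
  apply injective_projections; simpl; ring.

Definition cseq_pair_ModuleSpace : ModuleSpace R_Ring :=
  prod_ModuleSpace R_Ring cseq_R_ModuleSpace cseq_R_ModuleSpace.

Lemma cseq_pair_plus (u v : cseq_pair_ModuleSpace) :
  plus u v = (sadd (fst u) (fst v), sadd (snd u) (snd v)).
Proof. destruct u, v. reflexivity. Qed.

Lemma cseq_pair_scal (t : R) (u : cseq_pair_ModuleSpace) :
  scal t u = (sscal (RtoC t) (fst u), sscal (RtoC t) (snd u)).
Proof.
destruct u as [u1 u2]. change (scal t (u1, u2)) with (scal t u1, scal t u2).
f_equal; apply functional_extensionality; intro j; unfold sscal, Cmult, RtoC;
  apply injective_projections; simpl; change (scal t ?a) with (t * a); ring.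
Qed.

Definition rlinear_on (D : cseq -> Prop) (h : cseq -> R) : Prop :=
  (forall x y, D x -> D y -> h (sadd x y) = h x + h y) /\
  (forall (t : R) x, D x -> h (sscal (RtoC t) x) = t * h x).

Definition seminorm_on (D : cseq -> Prop) (q : cseq -> R) : Prop :=
  (forall x, D x -> 0 <= q x) /\
  (forall x y, D x -> D y -> q (sadd x y) <= q x + q y) /\
  (forall c x, D x -> q (sscal c x) = Cmod c * q x).

Lemma sadd_szero_l x : sadd szero x = x.
Proof. cseq_ring. Qed.

Lemma sadd_szero_r x : sadd x szero = x.
Proof. cseq_ring. Qed.

Lemma sscal_szero c : sscal c szero = szero.
Proof. cseq_ring. Qed.

Lemma seminorm_szero D q : subspace D -> seminorm_on D q -> q szero = 0.
Proof.
intros [D0 _] [_ [_ q_scal]].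
rewrite <- (sscal_szero (RtoC 0)), q_scal, Cmod_0 by exact D0. ring.
Qed.

Lemma seminorm_pos_scal D q (t : R) x : seminorm_on D q -> 0 <= t -> D x ->
  q (sscal (RtoC t) x) = t * q x.
Proof. intros [_ [_ q_scal]] Ht Dx. now rewrite q_scal, Cmod_R, Rabs_pos_eq. Qed.

Lemma seminorm_opp D q x : seminorm_on D q -> D x -> q (sscal (RtoC (-1)) x) = q x.
Proof.
intros [_ [_ q_scal]] Dx. rewrite q_scal, Cmod_R, Rabs_m1 by exact Dx. ring.
Qed.

(* Hahn-Banach on D1 x D2, extending h from the diagonal of I0 under c (q1 + q2):
   the two partial functions of the extension split h. *)
Section PairExtension.

Variables (I0 D1 D2 : cseq -> Prop) (q1 q2 : cseq -> R) (c : R) (h : cseq -> R).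
Hypotheses (D1_sub : subspace D1) (D2_sub : subspace D2) (I0_sub : subspace I0).
Hypothesis I0_incl : forall z, I0 z -> D1 z /\ D2 z.
Hypotheses (q1_semi : seminorm_on D1 q1) (q2_semi : seminorm_on D2 q2) (c_ge0 : 0 <= c).
Hypothesis h_lin : rlinear_on I0 h.
Hypothesis h_le : forall z, I0 z -> h z <= c * (q1 z + q2 z).

Let Dom (v : cseq_pair_ModuleSpace) := D1 (fst v) /\ D2 (snd v).
Let p (v : cseq_pair_ModuleSpace) := c * (q1 (fst v) + q2 (snd v)).

Lemma pair_extension : exists Phi : cseq_pair_ModuleSpace -> R,
  (forall u v, Dom u -> Dom v -> Phi (plus u v) = Phi u + Phi v) /\
  (forall (t : R) v, Dom v -> Phi (scal t v) = t * Phi v) /\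
  (forall v, Dom v -> Phi v <= p v) /\
  (forall z, I0 z -> Phi (z, z) = h z).
Proof.
destruct D1_sub as [D1_0 [D1_plus D1_scal]], D2_sub as [D2_0 [D2_plus D2_scal]].
destruct I0_sub as [I0_0 [I0_plus I0_scal]], h_lin as [h_plus h_scal].
destruct (hahn_banach Dom p)
  with (M := fun v : cseq_pair_ModuleSpace => I0 (fst v) /\ snd v = fst v)
  (phi := fun v : cseq_pair_ModuleSpace => h (fst v)) as [Phi [Phi_plus [Phi_scal [Phi_le Phi_M]]]].
- intros u v [Du1 Du2] [Dv1 Dv2]. rewrite cseq_pair_plus. split; simpl; auto.
- intros t v [Dv1 Dv2]. rewrite cseq_pair_scal. split; simpl; auto.
- intros [u1 u2] [v1 v2] [Du1 Du2] [Dv1 Dv2]. unfold p. rewrite cseq_pair_plus. simpl in *.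
  destruct q1_semi as [_ [q1_sub _]], q2_semi as [_ [q2_sub _]].
  assert (H1 := q1_sub _ _ Du1 Dv1). assert (H2 := q2_sub _ _ Du2 Dv2).
  assert (H := Rmult_le_compat_l c _ _ c_ge0 (Rplus_le_compat _ _ _ _ H1 H2)). lra.
- intros t [v1 v2] Ht [Dv1 Dv2]. unfold p. rewrite cseq_pair_scal. simpl in *.
  rewrite (seminorm_pos_scal D1), (seminorm_pos_scal D2) by (auto; lra). ring.
- split; [exact I0_0 | reflexivity].
- intros [v1 v2] [Iv Ev]. simpl in *. subst. split; apply I0_incl, Iv.
- intros [u1 u2] [v1 v2] [Iu Eu] [Iv Ev]. rewrite cseq_pair_plus. simpl in *. subst. auto.
- intros t [v1 v2] [Iv Ev]. rewrite cseq_pair_scal. simpl in *. subst. auto.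
- intros [u1 u2] [v1 v2] [Iu _] [Iv _]. rewrite cseq_pair_plus. simpl in *. auto.
- intros t [v1 v2] [Iv _]. rewrite cseq_pair_scal. simpl in *. auto.
- intros [v1 v2] [Iv Ev]. unfold p. simpl in *. subst. auto.
- exists Phi. split; [exact Phi_plus|]. split; [exact Phi_scal|]. split; [exact Phi_le|].
  intros z Iz. apply (Phi_M (z, z)). now split.
Qed.

Lemma pair_extension_abs : exists Phi : cseq_pair_ModuleSpace -> R,
  (forall u v, Dom u -> Dom v -> Phi (plus u v) = Phi u + Phi v) /\
  (forall (t : R) v, Dom v -> Phi (scal t v) = t * Phi v) /\
  (forall v, Dom v -> Rabs (Phi v) <= p v) /\
  (forall z, I0 z -> Phi (z, z) = h z).
Proof.
destruct pair_extension as [Phi [Phi_plus [Phi_scal [Phi_le Phi_diag]]]].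
exists Phi. split; [exact Phi_plus|]. split; [exact Phi_scal|]. split; [|exact Phi_diag].
intros [v1 v2] [Dv1 Dv2]. apply Rabs_le. split; [|exact (Phi_le _ (conj Dv1 Dv2))].
assert (Dm : Dom (scal (-1) (v1, v2))).
{ rewrite cseq_pair_scal. split; apply D1_sub || apply D2_sub; assumption. }
assert (Hm := Phi_le _ Dm). rewrite Phi_scal in Hm by exact (conj Dv1 Dv2).
unfold p in *. rewrite cseq_pair_scal in Hm. simpl in *.
rewrite (seminorm_opp D1), (seminorm_opp D2) in Hm by assumption. lra.
Qed.

Lemma rlinear_split : exists h1 h2, rlinear_on D1 h1 /\ rlinear_on D2 h2 /\
  (forall y, D1 y -> Rabs (h1 y) <= c * q1 y) /\
  (forall y, D2 y -> Rabs (h2 y) <= c * q2 y) /\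
  (forall z, I0 z -> h z = h1 z + h2 z).
Proof.
destruct pair_extension_abs as [Phi [Phi_plus [Phi_scal [Phi_abs Phi_diag]]]].
destruct D1_sub as [D1_0 [D1_plus D1_scal]], D2_sub as [D2_0 [D2_plus D2_scal]].
assert (q1_0 := seminorm_szero D1 q1 D1_sub q1_semi).
assert (q2_0 := seminorm_szero D2 q2 D2_sub q2_semi).
exists (fun y => Phi (y, szero)), (fun y => Phi (szero, y)).
split; [split|split; [split|split; [|split]]].
- intros x y Dx Dy. rewrite <- Phi_plus by (split; assumption).
  now rewrite cseq_pair_plus, sadd_szero_l.
- intros t x Dx. rewrite <- Phi_scal by (split; assumption).
  now rewrite cseq_pair_scal, sscal_szero.
- intros x y Dx Dy. rewrite <- Phi_plus by (split; assumption).
  now rewrite cseq_pair_plus, sadd_szero_l.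
- intros t x Dx. rewrite <- Phi_scal by (split; assumption).
  now rewrite cseq_pair_scal, sscal_szero.
- intros y Dy. assert (H := Phi_abs (y, szero) (conj Dy D2_0)).
  unfold p in H. simpl in H. now rewrite q2_0, Rplus_0_r in H.
- intros y Dy. assert (H := Phi_abs (szero, y) (conj D1_0 Dy)).
  unfold p in H. simpl in H. now rewrite q1_0, Rplus_0_l in H.
- intros z Iz. destruct (I0_incl z Iz) as [D1z D2z].
  rewrite <- Phi_diag, <- Phi_plus by (auto || split; assumption).
  now rewrite cseq_pair_plus, sadd_szero_l, sadd_szero_r.
Qed.

End PairExtension.

Lemma Re_rlinear_on D f : linear_on D f -> rlinear_on D (fun z => Re (f z)).
Proof.
intros [f_plus f_scal]. split.
- intros x y Dx Dy. now rewrite f_plus.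
- intros t x Dx. rewrite f_scal by exact Dx. unfold Re, Cmult, RtoC. simpl. ring.
Qed.

Lemma linear_on_Re D f z : linear_on D f -> D z ->
  f z = (Re (f z), - Re (f (sscal Ci z))).
Proof.
intros [_ f_scal] Dz. rewrite f_scal by exact Dz.
destruct (f z) as [a b]. unfold Re, Cmult, Ci. simpl. f_equal; ring.
Qed.

Definition complexify (h : cseq -> R) : cseq -> C := fun z => (h z, - h (sscal Ci z)).

Lemma complexify_linear D h : subspace D -> rlinear_on D h -> linear_on D (complexify h).
Proof.
intros [_ [D_plus D_scal]] [h_plus h_scal]. unfold complexify. split.
- intros x y Dx Dy.
  replace (sscal Ci (sadd x y)) with (sadd (sscal Ci x) (sscal Ci y)) by cseq_ring.
  rewrite !h_plus by auto. unfold Cplus. simpl. f_equal; ring.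
- intros [a b] y Dy.
  replace (sscal (a, b) y) with (sadd (sscal (RtoC a) y) (sscal (RtoC b) (sscal Ci y)))
    by cseq_ring.
  replace (sscal Ci (sadd (sscal (RtoC a) y) (sscal (RtoC b) (sscal Ci y))))
    with (sadd (sscal (RtoC a) (sscal Ci y)) (sscal (RtoC (- b)) y)) by cseq_ring.
  rewrite !h_plus, !h_scal by auto. unfold Cmult. simpl. f_equal; ring.
Qed.

Lemma complexify_bound D q h c : seminorm_on D q -> subspace D ->
  (forall y, D y -> Rabs (h y) <= c * q y) ->
  forall y, D y -> Cmod (complexify h y) <= sqrt 2 * (c * q y).
Proof.
intros [_ [_ q_scal]] [_ [_ D_scal]] h_le y Dy.
eapply Rle_trans; [apply Cmod_2Rmax|].
apply Rmult_le_compat_l; [apply sqrt_pos|]. apply Rmax_lub; simpl.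
- exact (h_le y Dy).
- rewrite Rabs_Ropp, <- (Rmult_1_l (q y)), <- Cmod_Ci, <- q_scal by exact Dy.
  exact (h_le _ (D_scal _ _ Dy)).
Qed.

Lemma linear_split (I0 D1 D2 : cseq -> Prop) (q1 q2 : cseq -> R) (c : R) (f : cseq -> C) :
  subspace D1 -> subspace D2 -> subspace I0 -> (forall z, I0 z -> D1 z /\ D2 z) ->
  seminorm_on D1 q1 -> seminorm_on D2 q2 -> linear_on I0 f ->
  (forall z, I0 z -> Cmod (f z) <= c * (q1 z + q2 z)) ->
  exists f1 f2 c', linear_on D1 f1 /\ linear_on D2 f2 /\
    (forall y, D1 y -> Cmod (f1 y) <= c' * q1 y) /\
    (forall y, D2 y -> Cmod (f2 y) <= c' * q2 y) /\
    (forall z, I0 z -> f z = Cplus (f1 z) (f2 z)).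
Proof.
intros D1_sub D2_sub I0_sub I0_incl q1_semi q2_semi f_lin f_le.
destruct (rlinear_split I0 D1 D2 q1 q2 (Rabs c) (fun z => Re (f z)) D1_sub D2_sub I0_sub
  I0_incl q1_semi q2_semi (Rabs_pos c) (Re_rlinear_on I0 f f_lin))
  as [h1 [h2 [h1_lin [h2_lin [h1_le [h2_le h_split]]]]]].
{ intros z Iz. destruct (I0_incl z Iz) as [D1z D2z].
  assert (Hq : 0 <= q1 z + q2 z)
    by (apply Rplus_le_le_0_compat; [apply q1_semi | apply q2_semi]; assumption).
  eapply Rle_trans; [apply Rle_abs|]. eapply Rle_trans; [apply re_le_Cmod|].
  eapply Rle_trans; [exact (f_le z Iz)|]. apply Rmult_le_compat_r; [exact Hq | apply Rle_abs]. }
exists (complexify h1), (complexify h2), (sqrt 2 * Rabs c).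
split; [now apply complexify_linear|]. split; [now apply complexify_linear|].
split; [|split].
- intros y Dy. rewrite Rmult_assoc. exact (complexify_bound D1 q1 h1 _ q1_semi D1_sub h1_le y Dy).
- intros y Dy. rewrite Rmult_assoc. exact (complexify_bound D2 q2 h2 _ q2_semi D2_sub h2_le y Dy).
- intros z Iz. assert (Iiz : I0 (sscal Ci z)) by (apply I0_sub; exact Iz).
  rewrite (linear_on_Re I0 f z f_lin Iz), (h_split z Iz), (h_split _ Iiz).
  unfold complexify, Cplus. simpl. f_equal; ring.
Qed.

Lemma seminorm_on_incl D D' q : (forall z, D' z -> D z) -> seminorm_on D q -> seminorm_on D' q.
Proof. intros Hincl [q_nonneg [q_sub q_scal]]. split; [|split]; auto. Qed.

Lemma semisum_seminorm {I : Type} X (p : I -> cseq -> R) l :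
  (forall i, seminorm_on X (p i)) -> seminorm_on X (semisum p l).
Proof.
intros p_semi. induction l as [|i l [IH_nonneg [IH_sub IH_scal]]].
- split; [|split]; intros; unfold semisum; simpl; lra.
- destruct (p_semi i) as [p_nonneg [p_sub p_scal]].
  assert (cons_eq : forall x, semisum p (i :: l) x = p i x + semisum p l x)
    by reflexivity.
  split; [|split].
  + intros x Xx. rewrite cons_eq. specialize (p_nonneg x Xx). specialize (IH_nonneg x Xx). lra.
  + intros x y Xx Xy. rewrite !cons_eq.
    specialize (p_sub x y Xx Xy). specialize (IH_sub x y Xx Xy). lra.
  + intros c x Xx. rewrite !cons_eq, p_scal, IH_scal by exact Xx. ring.
Qed.

Lemma finite_dual_sum {I : Type} (I0 : cseq -> Prop) (D : I -> cseq -> Prop)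
  (q : I -> cseq -> R) :
  subspace I0 -> (forall i, subspace (D i)) -> (forall i, seminorm_on (D i) (q i)) ->
  (forall i z, I0 z -> D i z) ->
  forall l c f, linear_on I0 f -> (forall z, I0 z -> Cmod (f z) <= c * semisum q l z) ->
  exists gs : list (I * (cseq -> C)),
    (forall g, In g gs -> linear_on (D (fst g)) (snd g) /\
       exists c', forall y, D (fst g) y -> Cmod (snd g y) <= c' * q (fst g) y) /\
    (forall z, I0 z -> f z = csum (map (fun g => snd g z) gs)).
Proof.
intros I0_sub D_sub q_semi I0_incl l.
induction l as [|i l IH]; intros c f f_lin f_le.
- exists nil. split; [intros g []|]. intros z Iz. apply Cmod_eq_0.
  assert (H := f_le z Iz). simpl in H. rewrite Rmult_0_r in H.
  apply Rle_antisym; [exact H | apply Cmod_ge_0].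
- assert (semi_I0 : seminorm_on I0 (semisum q l))
    by (apply semisum_seminorm; intros j; exact (seminorm_on_incl _ _ _ (I0_incl j) (q_semi j))).
  destruct (linear_split I0 (D i) I0 (q i) (semisum q l) c f (D_sub i) I0_sub I0_sub
    (fun z Iz => conj (I0_incl i z Iz) Iz) (q_semi i) semi_I0 f_lin f_le)
    as [f1 [f2 [c' [f1_lin [f2_lin [f1_le [f2_le f_split]]]]]]].
  destruct (IH c' f2 f2_lin f2_le) as [gs [gs_dual gs_sum]].
  exists ((i, f1) :: gs). split.
  + intros g [<-|Hg]; [split; [exact f1_lin | now exists c'] | exact (gs_dual g Hg)].
  + intros z Iz. simpl. now rewrite f_split, gs_sum.
Qed.

Lemma dual_of_seminorm_bound {I : Type} X (p : I -> cseq -> R) i c g :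
  linear_on X g -> (forall y, X y -> Cmod (g y) <= c * p i y) -> dual X p g.
Proof.
intros g_lin g_le. split; [exact g_lin|]. exists (i :: nil), c. intros y Xy.
unfold semisum. simpl. rewrite Rplus_0_r. exact (g_le y Xy).
Qed.

Lemma Cmod_lim_unique (a : nat -> C) (x y : C) :
  is_lim_seq (fun m => Cmod (Cminus (a m) x)) 0 ->
  is_lim_seq (fun m => Cmod (Cminus (a m) y)) 0 -> x = y.
Proof.
intros Hx Hy.
assert (Hle : Rbar_le (Cmod (Cminus x y)) (0 + 0)).
{ apply (is_lim_seq_le (fun _ => Cmod (Cminus x y))
    (fun m => Cmod (Cminus (a m) x) + Cmod (Cminus (a m) y))).
  - intros m. replace (Cminus x y) with (Cplus (Copp (Cminus (a m) x)) (Cminus (a m) y))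
      by (apply injective_projections; simpl; ring).
    eapply Rle_trans; [apply Cmod_triangle|]. rewrite Cmod_opp. lra.
  - apply is_lim_seq_const.
  - exact (is_lim_seq_plus' _ _ _ _ Hx Hy). }
simpl in Hle. rewrite Rplus_0_r in Hle.
assert (Hxy : Cminus x y = RtoC 0)
  by (apply Cmod_eq_0, Rle_antisym; [exact Hle | apply Cmod_ge_0]).
apply injective_projections; [apply (f_equal fst) in Hxy | apply (f_equal snd) in Hxy];
  simpl in Hxy; lra.
Qed.

Lemma semisum_lim {I : Type} (p : I -> cseq -> R) l (w : nat -> cseq) :
  (forall i, is_lim_seq (fun m => p i (w m)) 0) -> is_lim_seq (fun m => semisum p l (w m)) 0.
Proof.
intros Hlim. induction l as [|i l IH].
- apply is_lim_seq_const.
- rewrite <- (Rplus_0_r 0). exact (is_lim_seq_plus' _ _ _ _ (Hlim i) IH).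
Qed.

Lemma FK_coordinate_limit {I : Type} (Y : cseq -> Prop) (p : I -> cseq -> R) (u : nat -> cseq) x j :
  is_FK Y p -> (forall m, Y (u m)) -> Y x ->
  (forall i, is_lim_seq (fun m => p i (ssub (u m) x)) 0) ->
  is_lim_seq (fun m => Cmod (Cminus (u m j) (x j))) 0.
Proof.
intros [[_ [Y_plus Y_scal]] [_ [_ [Y_coord _]]]] Yu Yx Hlim.
destruct (Y_coord j) as [l [c Hc]].
apply (is_lim_seq_le_le (fun _ => 0) _ (fun m => c * semisum p l (ssub (u m) x))).
- intros m. split; [apply Cmod_ge_0|]. apply (Hc (ssub (u m) x)).
  replace (ssub (u m) x) with (sadd (u m) (sscal (RtoC (-1)) x)) by cseq_ring. auto.
- apply is_lim_seq_const.
- assert (L := is_lim_seq_scal_l _ c _ (semisum_lim p l _ Hlim)).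
  simpl in L. now rewrite Rmult_0_r in L.
Qed.

Lemma sigT_countable_index (IY : nat -> Type) :
  (forall n, countable_index (IY n)) -> countable_index {n & IY n}.
Proof.
intros HI.
assert (e : forall n, {e : nat -> option (IY n) | forall i, exists k, e k = Some i})
  by (intros n; apply constructive_indefinite_description, HI).
exists (fun k => let (n, b) := Cantor.of_nat k in
   match proj1_sig (e n) b with Some i => Some (existT IY n i) | None => None end).
intros [n i]. destruct (proj2_sig (e n) i) as [b Hb].
exists (Cantor.to_nat (n, b)). now rewrite Cantor.cancel_of_to, Hb.
Qed.

Section Intersection.

Variables (IY : nat -> Type) (Y : nat -> cseq -> Prop) (pY : forall n, IY n -> cseq -> R).

Lemma inter_subspace : (forall n, subspace (Y n)) -> subspace (inter_space Y).
Proof.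
intros Y_sub. split; [|split].
- intros n. apply Y_sub.
- intros x y Ix Iy n. apply Y_sub; auto.
- intros c x Ix n. apply Y_sub; auto.
Qed.

Lemma inter_seminorm_family :
  (forall n, seminorm_family (Y n) (pY n)) -> seminorm_family (inter_space Y) (inter_semi pY).
Proof.
intros Y_semi [n i]. destruct (Y_semi n i) as [p_nonneg [p_sub p_scal]].
unfold inter_semi. simpl. split; [|split]; intros; auto.
Qed.

Lemma semisum_inter_semi n l x :
  semisum (inter_semi pY) (map (existT IY n) l) x = semisum (pY n) l x.
Proof. induction l as [|i l IH]; [reflexivity|]. unfold semisum in *. simpl. now rewrite IH. Qed.

Lemma continuous_wrt_inter n g :
  continuous_wrt (Y n) (pY n) g -> continuous_wrt (inter_space Y) (inter_semi pY) g.
Proof.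
intros [l [c Hc]]. exists (map (existT IY n) l), c. intros x Ix.
rewrite semisum_inter_semi. exact (Hc x (Ix n)).
Qed.

Lemma inter_complete :
  (forall n, is_FK (Y n) (pY n)) -> complete_wrt (inter_space Y) (inter_semi pY).
Proof.
intros Y_FK u Iu Hcauchy.
assert (Hlim : forall n, exists x, Y n x /\
          forall i, is_lim_seq (fun m => pY n i (ssub (u m) x)) 0).
{ intros n. destruct (Y_FK n) as [_ [_ [_ [_ Y_complete]]]]. apply Y_complete.
  - intros m. apply Iu.
  - intros i. exact (Hcauchy (existT IY n i)). }
destruct (functional_choice _ Hlim) as [xs Hxs].
assert (xs_const : forall n, xs n = xs 0%nat).
{ intros n. apply functional_extensionality. intros j.
  apply (Cmod_lim_unique (fun m => u m j)).
  - apply (FK_coordinate_limit (Y n) (pY n)); [apply Y_FK | intros m; apply Iu | apply Hxs..].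
  - apply (FK_coordinate_limit (Y 0) (pY 0)); [apply Y_FK | intros m; apply Iu | apply Hxs..]. }
exists (xs 0%nat). split.
- intros n. rewrite <- (xs_const n). apply Hxs.
- intros [n i]. unfold inter_semi. simpl. rewrite <- (xs_const n). apply Hxs.
Qed.

Lemma inter_FK : (forall n, is_FK (Y n) (pY n)) -> is_FK (inter_space Y) (inter_semi pY).
Proof.
intros Y_FK. split; [|split; [|split; [|split]]].
- apply inter_subspace. intros n. apply Y_FK.
- apply inter_seminorm_family. intros n. apply Y_FK.
- apply sigT_countable_index. intros n. apply Y_FK.
- intros j. apply (continuous_wrt_inter 0). apply Y_FK.
- exact (inter_complete Y_FK).
Qed.

Lemma dual_inter_sum (f : cseq -> C) :
  (forall n, subspace (Y n)) -> (forall n, seminorm_family (Y n) (pY n)) ->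
  dual (inter_space Y) (inter_semi pY) f ->
  exists gs : list ({n & IY n} * (cseq -> C)),
    (forall g, In g gs -> dual (Y (projT1 (fst g))) (pY (projT1 (fst g))) (snd g)) /\
    (forall z, inter_space Y z -> f z = csum (map (fun g => snd g z) gs)).
Proof.
intros Y_sub Y_semi [f_lin [l [c f_le]]].
destruct (finite_dual_sum (inter_space Y) (fun e => Y (projT1 e)) (inter_semi pY)
  (inter_subspace Y_sub) (fun e => Y_sub (projT1 e)) (fun e => Y_semi (projT1 e) (projT2 e))
  (fun e z Iz => Iz (projT1 e)) l c f f_lin f_le) as [gs [gs_dual gs_sum]].
exists gs. split; [|exact gs_sum].
intros g Hg. destruct (gs_dual g Hg) as [g_lin [c' g_le]].
exact (dual_of_seminorm_bound _ _ (projT2 (fst g)) c' _ g_lin g_le).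
Qed.

End Intersection.

Lemma finite_support_in X : subspace X -> contains_phi X ->
  forall N z, (forall j, (N <= j)%nat -> z j = RtoC 0) -> X z.
Proof.
intros [X0 [X_plus X_scal]] Xphi N. induction N as [|N IH]; intros z Hz.
- replace z with szero; [exact X0|]. apply functional_extensionality. intros j.
  rewrite Hz; [reflexivity | lia].
- replace z with (sadd (trunc N z) (sscal (z N) (delta N))).
  + apply X_plus; [|apply X_scal, Xphi]. apply IH. intros j Hj. unfold trunc.
    destruct (Nat.ltb_spec j N); [lia | reflexivity].
  + apply functional_extensionality. intros j. unfold sadd, sscal, trunc, delta.
    destruct (Nat.ltb_spec j N), (Nat.eqb_spec j N); try lia;
      [| subst | rewrite (Hz j) by lia]; apply injective_projections; simpl; ring.
Qed.

Lemma csum_zero (f : nat -> C) l : (forall k, In k l -> f k = RtoC 0) -> csum (map f l) = RtoC 0.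
Proof.
induction l as [|k l IH]; intros Hf; simpl; [reflexivity|].
rewrite Hf by now left. rewrite IH by (intros k' Hk'; apply Hf; now right).
apply injective_projections; simpl; ring.
Qed.

Lemma Tn_finite_support (pp qq : nat -> nat) n x j :
  (qq n <= j)%nat -> Defs.Tn pp qq n x j = RtoC 0.
Proof.
intros Hj. unfold Defs.Tn. rewrite csum_zero.
- apply injective_projections; simpl; ring.
- intros k Hk. apply in_seq in Hk. unfold trunc.
  destruct (Nat.ltb_spec j k); [lia | reflexivity].
Qed.

Lemma csum_lim {A : Type} (gs : list A) (a : A -> nat -> C) (b : A -> C) :
  (forall g, In g gs -> is_lim_seq (fun n => Cmod (Cminus (a g n) (b g))) 0) ->
  is_lim_seq (fun n => Cmod (Cminus (csum (map (fun g => a g n) gs)) (csum (map b gs)))) 0.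
Proof.
induction gs as [|g gs IH]; intros Hlim; simpl.
- apply (is_lim_seq_ext (fun _ => 0)); [|apply is_lim_seq_const].
  intros n. rewrite <- Cmod_0. f_equal. apply injective_projections; simpl; ring.
- apply (is_lim_seq_le_le (fun _ => 0) _
    (fun n => Cmod (Cminus (a g n) (b g)) +
              Cmod (Cminus (csum (map (fun g => a g n) gs)) (csum (map b gs))))).
  + intros n. split; [apply Cmod_ge_0|].
    eapply Rle_trans; [|apply Cmod_triangle]. right. f_equal.
    apply injective_projections; simpl; ring.
  + apply is_lim_seq_const.
  + rewrite <- (Rplus_0_r 0). apply is_lim_seq_plus'; [apply Hlim; now left|].
    apply IH. intros g' Hg'. apply Hlim. now right.
Qed.

Theorem mainTheorem4 (pp qq : nat -> nat)
  (Hpq : forall n, (pp n < qq n)%nat)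
  (Hq : forall M : nat, exists N, forall n, (N <= n)%nat -> (M <= qq n)%nat)
  (IX : Type) (X : cseq -> Prop) (pX : IX -> cseq -> R)
  (HX : is_FK X pX) (HphiX : contains_phi X)
  (IY : nat -> Type) (Y : nat -> cseq -> Prop) (pY : forall n, IY n -> cseq -> R)
  (HY : forall n, dc_conull pp qq X pX (Y n) (pY n)) :
  dc_conull pp qq X pX (inter_space Y) (inter_semi pY).
Proof.
assert (Y_FK : forall n, is_FK (Y n) (pY n)) by (intros n; apply HY).
assert (XY : forall n x, X x -> Y n x) by (intros n; apply HY).
destruct (HY 0%nat) as [_ [_ [_ [DW_ne_DB _]]]].
split; [exact HX|]. split; [exact (inter_FK IY Y pY Y_FK)|].
split; [intros x Xx n; exact (XY n x Xx)|]. split; [exact DW_ne_DB|].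
intros x Hx. split; [intros n; exact (XY n x (proj1 Hx))|].
intros f Hf.
destruct (dual_inter_sum IY Y pY f (fun n => proj1 (Y_FK n)) (fun n => proj1 (proj2 (Y_FK n))) Hf)
  as [gs [gs_dual gs_sum]].
assert (XT : forall n, X (Defs.Tn pp qq n x))
  by (intros n; exact (finite_support_in X (proj1 HX) HphiX _ _ (Tn_finite_support pp qq n x))).
apply (is_lim_seq_ext (fun n => Cmod (Cminus (csum (map (fun g => snd g (Defs.Tn pp qq n x)) gs))
                                              (csum (map (fun g => snd g x) gs))))).
{ intros n. rewrite <- !gs_sum; [reflexivity| |]; intros m; apply XY; [apply Hx | apply XT]. }
apply csum_lim. intros g Hg. destruct (HY (projT1 (fst g))) as [_ [_ [_ [_ conull]]]].
exact (proj2 (conull x Hx) _ (gs_dual g Hg)).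
Qed.
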